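(* Let $\theta^*$ be an optimal solution of OPT and let $m^*(t)$ be the number of jobs not yet completed at time $t$ under $\theta^*$. For any two times $t_1,t_2>0$, if $m^*(t_1)=m^*(t_2)$ then $\theta_i^*(t_1)=\theta_i^*(t_2)$ for all $i=1,\dots,M$.
   Context: Setting (problem OPT). There are $M$ jobs, all available at time $0$, with sizes $x_1\ge x_2\ge\cdots\ge x_M>0$ and weights $0<w_1\le w_2\le\cdots\le w_M$. A total resource $B>0$ is shared. The speedup function $s:[0,B]\to[0,\infty)$ satisfies: $s(0)=0$; $s$ is strictly increasing, strictly concave, differentiable, and $s'$ is continuous on $[0,B]$. A schedule consists of functions $\theta_i:(0,\infty)\to[0,B]$, $i=1,\dots,M$, each right-continuous in $t$, with $\sum_{i=1}^M\theta_i(t)\le B$ for all $t>0$. The service received by job $i$ on $[t_1,t_2]$ is $Q_i(t_1,t_2)=\int_{t_1}^{t_2}s(\theta_i(t))\,dt$. The completion time $T_i$ of job $i$ satisfies $Q_i(0,T_i)=x_i$, and $\theta_i(t)=0$ for $t>T_i$. OPT is the problem of choosing a schedule minimizing $J=\sum_{i=1}^M w_iT_i$. An optimal solution is a feasible schedule attaining the minimum. *)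

From Stdlib Require Import Reals List.
From Coquelicot Require Import Coquelicot.
Open Scope R_scope.

Fixpoint rsum (f : nat -> R) (n : nat) : R :=
  match n with O => 0 | S k => rsum f k + f k end.

Fixpoint count_lt (P : nat -> Prop) (Pdec : forall i, {P i} + {~ P i}) (n : nat) : nat :=
  match n with
  | O => O
  | S k => (count_lt P Pdec k + if Pdec k then 1 else 0)%nat
  end.

Definition in_0B (B y : R) : Prop := 0 <= y <= B.

Definition speedup_ok (B : R) (s : R -> R) : Prop :=
  s 0 = 0 /\
  (forall a b, in_0B B a -> in_0B B b -> a < b -> s a < s b) /\
  (forall a b l, in_0B B a -> in_0B B b -> a <> b -> 0 < l < 1 ->
      l * s a + (1 - l) * s b < s (l * a + (1 - l) * b)) /\
  (* differentiable on [0,B] (one-sided at endpoints) with continuous derivative *)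
  (exists ds : R -> R,
     (forall a, in_0B B a -> forall eps, 0 < eps -> exists delta, 0 < delta /\
        forall y, in_0B B y -> Rabs (y - a) < delta ->
          Rabs (s y - s a - ds a * (y - a)) <= eps * Rabs (y - a)) /\
     (forall a, in_0B B a -> forall eps, 0 < eps -> exists delta, 0 < delta /\
        forall y, in_0B B y -> Rabs (y - a) < delta -> Rabs (ds y - ds a) < eps)).

Definition right_cont_at (f : R -> R) (t : R) : Prop :=
  forall eps, 0 < eps -> exists delta, 0 < delta /\
    forall u, t <= u < t + delta -> Rabs (f u - f t) < eps.

Definition feasible (M : nat) (x : nat -> R) (B : R) (s : R -> R)
    (theta : nat -> R -> R) (T : nat -> R) : Prop :=
  (forall i, (i < M)%nat -> forall t, 0 < t -> 0 <= theta i t <= B) /\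
  (forall i, (i < M)%nat -> forall t, 0 < t -> right_cont_at (theta i) t) /\
  (forall t, 0 < t -> rsum (fun i => theta i t) M <= B) /\
  (forall i, (i < M)%nat -> 0 < T i) /\
  (forall i, (i < M)%nat -> is_RInt (fun t => s (theta i t)) 0 (T i) (x i)) /\
  (forall i, (i < M)%nat -> forall t, T i < t -> theta i t = 0).

Definition cost (M : nat) (w : nat -> R) (T : nat -> R) : R :=
  rsum (fun i => w i * T i) M.

Definition optimal (M : nat) (x w : nat -> R) (B : R) (s : R -> R)
    (theta : nat -> R -> R) (T : nat -> R) : Prop :=
  feasible M x B s theta T /\
  forall theta' T', feasible M x B s theta' T' -> cost M w T <= cost M w T'.

Definition remaining (M : nat) (T : nat -> R) (t : R) : nat :=
  count_lt (fun i => t < T i) (fun i => Rlt_dec t (T i)) M.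

From Stdlib Require Import Reals Lra Lia IndefiniteDescription.
From Coquelicot Require Import Coquelicot.
Open Scope R_scope.

(* Suppose the same jobs are active at times t1 < t2 while some job i is allocated
   a_i = theta_i(t1) <> b_i = theta_i(t2).  On two short windows [t1, t1 + dl) and
   [t2, t2 + dl) give every job the average (a_j + b_j) / 2, except that job i hands a
   small amount to the others.  The budget still holds, strict concavity leaves job i a
   margin and monotonicity of s leaves every other job one, so each job is served at a
   rate exceeding (s a_j + s b_j) / 2 on both windows.  By right-continuity of the
   schedule, every active job then receives strictly more service before its completion
   time; stopping each job once it has received x_j yields a feasible schedule with
   strictly smaller weighted completion time. *)

Lemma rsum_ext f g n : (forall k, (k < n)%nat -> f k = g k) -> rsum f n = rsum g n.
Proof. induction n; simpl; intros; auto. rewrite IHn, (H n); auto; lia. Qed.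

Lemma rsum_le f g n : (forall k, (k < n)%nat -> f k <= g k) -> rsum f n <= rsum g n.
Proof.
  induction n; simpl; intros Hfg; [lra|].
  assert (rsum f n <= rsum g n) by (apply IHn; intros; apply Hfg; lia).
  specialize (Hfg n (Nat.lt_succ_diag_r n)). lra.
Qed.

Lemma rsum_lt f g n i : (forall k, (k < n)%nat -> f k <= g k) -> (i < n)%nat -> f i < g i ->
  rsum f n < rsum g n.
Proof.
  induction n; simpl; intros Hfg Hi Hlt; [lia|].
  destruct (Nat.eq_dec i n) as [->|Hin].
  - assert (rsum f n <= rsum g n) by (apply rsum_le; intros; apply Hfg; lia). lra.
  - assert (rsum f n < rsum g n) by (apply IHn; auto; lia).
    specialize (Hfg n (Nat.lt_succ_diag_r n)). lra.
Qed.

Lemma rsum_plus f g n : rsum (fun k => f k + g k) n = rsum f n + rsum g n.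
Proof. induction n; simpl; [lra|]. rewrite IHn; lra. Qed.

Lemma rsum_scal c f n : rsum (fun k => c * f k) n = c * rsum f n.
Proof. induction n; simpl; [lra|]. rewrite IHn; lra. Qed.

Lemma rsum_const c n : rsum (fun _ => c) n = INR n * c.
Proof. induction n; simpl rsum; [simpl; lra|]. rewrite IHn, S_INR; lra. Qed.

Lemma rsum_delta i v n : (i < n)%nat ->
  rsum (fun k => if Nat.eq_dec k i then v else 0) n = v.
Proof.
  assert (Hlow : forall m, (m <= i)%nat -> rsum (fun k => if Nat.eq_dec k i then v else 0) m = 0).
  { induction m; simpl; intros; auto. rewrite IHm by lia. destruct (Nat.eq_dec m i); [lia|lra]. }
  induction n; intros Hi; [lia|]. simpl.
  destruct (Nat.eq_dec n i) as [->|Hni].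
  - rewrite Hlow by lia. lra.
  - rewrite IHn by lia. lra.
Qed.

Lemma rsum_two f n i j : (forall k, (k < n)%nat -> 0 <= f k) -> (i < n)%nat -> (j < n)%nat ->
  i <> j -> f i + f j <= rsum f n.
Proof.
  intros Hf Hi Hj Hij. rewrite <- (rsum_delta i (f i) n), <- (rsum_delta j (f j) n) by auto.
  rewrite <- rsum_plus. apply rsum_le. intros k Hk.
  destruct (Nat.eq_dec k i), (Nat.eq_dec k j); subst; try lia; try lra.
  specialize (Hf k Hk). lra.
Qed.

Lemma rsum_redistribute c n i rho : (i < n)%nat -> 0 <= rho ->
  rsum (fun j => if Nat.eq_dec j i then c j - rho else c j + rho / INR n) n <= rsum c n.
Proof.
  intros Hi Hrho.
  assert (Hn : 1 <= INR n) by (replace 1 with (INR 1) by reflexivity; apply le_INR; lia).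
  apply Rle_trans with
    (rsum (fun j => c j + ((if Nat.eq_dec j i then - rho else 0) + rho / INR n)) n).
  - apply rsum_le. intros j Hj. destruct (Nat.eq_dec j i); [|lra].
    assert (0 <= rho / INR n) by (apply Rdiv_le_0_compat; lra). lra.
  - rewrite !rsum_plus, rsum_delta, rsum_const by auto.
    replace (INR n * (rho / INR n)) with rho by (field; lra). lra.
Qed.

Lemma count_lt_lt P Pd Q Qd n :
  (forall k, (k < n)%nat -> P k -> Q k) -> (exists k, (k < n)%nat /\ Q k /\ ~ P k) ->
  (count_lt P Pd n < count_lt Q Qd n)%nat.
Proof.
  assert (Hle : forall m, (forall k, (k < m)%nat -> P k -> Q k) ->
            (count_lt P Pd m <= count_lt Q Qd m)%nat).
  { induction m; simpl; intros HPQ; [lia|].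
    specialize (IHm (fun k Hk => HPQ k ltac:(lia))).
    destruct (Pd m), (Qd m); try lia. exfalso; auto. }
  induction n; intros HPQ [k [Hk [HQ HP]]]; [lia|]. simpl.
  destruct (Nat.eq_dec k n) as [->|Hkn].
  - specialize (Hle n (fun k Hk => HPQ k ltac:(lia))).
    destruct (Pd n), (Qd n); tauto || lia.
  - assert (count_lt P Pd n < count_lt Q Qd n)%nat.
    { apply IHn; [intros; apply HPQ; auto; lia | exists k; repeat split; auto; lia]. }
    destruct (Pd n), (Qd n); try lia. exfalso; auto.
Qed.

Lemma remaining_eq_active M T t1 t2 : t1 <= t2 -> remaining M T t1 = remaining M T t2 ->
  forall j, (j < M)%nat -> t1 < T j -> t2 < T j.
Proof.
  intros H12 Hrem j Hj Hj1. destruct (Rlt_dec t2 (T j)) as [|Hn]; auto. exfalso.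
  assert (remaining M T t2 < remaining M T t1)%nat; [|lia].
  apply count_lt_lt; [intros; lra | exists j; auto].
Qed.
Section Speedup.

Variables (B : R) (s : R -> R).
Hypothesis hs : speedup_ok B s.

Lemma speedup_continuous a : in_0B B a -> forall e, 0 < e ->
  exists d, 0 < d /\ forall y, in_0B B y -> Rabs (y - a) < d -> Rabs (s y - s a) < e.
Proof.
  destruct hs as [_ [_ [_ [ds [Hds _]]]]]. intros Ha e He.
  destruct (Hds a Ha 1 Rlt_0_1) as [d [Hd Hlin]].
  set (K := Rabs (ds a) + 2).
  assert (HK : 0 < K) by (pose proof (Rabs_pos (ds a)); unfold K; lra).
  exists (Rmin d (e / K)). split; [apply Rmin_pos; auto; apply Rdiv_lt_0_compat; auto|].
  intros y Hy Hya.
  assert (Hya2 : Rabs (y - a) * K < e).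
  { assert (Hy2 : Rabs (y - a) < e / K) by (apply Rlt_le_trans with (1 := Hya); apply Rmin_r).
    apply (Rmult_lt_compat_r K) in Hy2; auto.
    unfold Rdiv in Hy2. rewrite Rmult_assoc, Rinv_l in Hy2; lra. }
  specialize (Hlin y Hy ltac:(apply Rlt_le_trans with (1 := Hya); apply Rmin_l)).
  assert (Rabs (s y - s a) <= Rabs (ds a) * Rabs (y - a) + Rabs (y - a)).
  { replace (s y - s a) with ((s y - s a - ds a * (y - a)) + ds a * (y - a)) by ring.
    rewrite <- Rabs_mult. eapply Rle_trans; [apply Rabs_triang|]. lra. }
  pose proof (Rabs_pos (y - a)). unfold K in Hya2. nra.
Qed.

Lemma speedup_le a b : in_0B B a -> in_0B B b -> a <= b -> s a <= s b.
Proof.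
  destruct hs as [_ [Hmono _]]. intros Ha Hb Hab.
  destruct (Rle_lt_or_eq_dec _ _ Hab) as [Hlt| ->]; [left; auto | lra].
Qed.

Lemma speedup_bounds y : in_0B B y -> 0 <= s y <= s B.
Proof.
  intros Hy. destruct hs as [Hs0 _]. unfold in_0B in *. split.
  - rewrite <- Hs0. apply speedup_le; unfold in_0B; lra.
  - apply speedup_le; unfold in_0B; lra.
Qed.

Lemma speedup_midpoint_lt a b : in_0B B a -> in_0B B b -> a <> b ->
  s a + s b < 2 * s ((a + b) / 2).
Proof.
  destruct hs as [_ [_ [Hconc _]]]. intros Ha Hb Hab.
  specialize (Hconc a b (1/2) Ha Hb Hab ltac:(lra)).
  replace ((a + b) / 2) with (1 / 2 * a + (1 - 1 / 2) * b) by field. lra.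
Qed.

Lemma speedup_midpoint_le a b : in_0B B a -> in_0B B b -> s a + s b <= 2 * s ((a + b) / 2).
Proof.
  intros Ha Hb. destruct (Req_dec a b) as [->|Hab].
  - replace ((b + b) / 2) with b by field. lra.
  - left; apply speedup_midpoint_lt; auto.
Qed.

Lemma right_cont_speedup f t : right_cont_at f t -> (forall u, t <= u -> in_0B B (f u)) ->
  right_cont_at (fun u => s (f u)) t.
Proof.
  intros Hf Hin e He.
  destruct (speedup_continuous (f t) (Hin t (Rle_refl t)) e He) as [d1 [Hd1 Hs]].
  destruct (Hf d1 Hd1) as [d2 [Hd2 Hfu]]. exists d2; split; auto.
  intros u Hu. apply Hs; [apply Hin; lra | apply Hfu; auto].
Qed.

End Speedup.

Lemma right_cont_local f g t : right_cont_at g t ->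
  (exists d, 0 < d /\ forall u, t <= u < t + d -> f u = g u) -> right_cont_at f t.
Proof.
  intros Hg [d [Hd Hfg]] e He. destruct (Hg e He) as [d' [Hd' H]].
  exists (Rmin d d'). split; [apply Rmin_pos; auto|]. intros u Hu.
  pose proof (Rmin_l d d'); pose proof (Rmin_r d d').
  rewrite (Hfg u), (Hfg t) by lra. apply H; lra.
Qed.

Lemma right_cont_const c t : right_cont_at (fun _ => c) t.
Proof. intros e He. exists 1. split; [lra|]. intros. rewrite Rminus_diag, Rabs_R0; auto. Qed.

Lemma ex_RInt_sub (f : R -> R) a b u v : a <= u <= v -> v <= b -> ex_RInt f a b -> ex_RInt f u v.
Proof.
  intros. apply (ex_RInt_Chasles_2 f a u v); [lra|].
  apply (ex_RInt_Chasles_1 f a v b); auto; lra.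
Qed.

Lemma RInt_const_R u v c : RInt (fun _ => c) u v = (v - u) * c.
Proof. rewrite RInt_const. reflexivity. Qed.

Lemma RInt_le_const (f : R -> R) u v K : u <= v -> ex_RInt f u v ->
  (forall t, u < t < v -> f t <= K) -> RInt f u v <= (v - u) * K.
Proof. intros. rewrite <- RInt_const_R. apply RInt_le; auto. apply ex_RInt_const. Qed.

Lemma RInt_ge_const (f : R -> R) u v m : u <= v -> ex_RInt f u v ->
  (forall t, u < t < v -> m <= f t) -> (v - u) * m <= RInt f u v.
Proof. intros. rewrite <- RInt_const_R. apply RInt_le; auto. apply ex_RInt_const. Qed.

Definition splice (a b v : R) (f : R -> R) (t : R) : R :=
  if Rle_dec a t then if Rlt_dec t b then v else f t else f t.

Lemma splice_in a b v f t : a <= t < b -> splice a b v f t = v.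
Proof. intros. unfold splice. destruct (Rle_dec a t), (Rlt_dec t b); lra. Qed.

Lemma splice_out a b v f t : ~ (a <= t < b) -> splice a b v f t = f t.
Proof. intros. unfold splice. destruct (Rle_dec a t), (Rlt_dec t b); tauto. Qed.

Lemma right_cont_splice a b v f t : right_cont_at f t -> right_cont_at (splice a b v f) t.
Proof.
  intros Hf. destruct (Rlt_dec t a).
  { apply right_cont_local with f; auto. exists (a - t); split; [lra|].
    intros; apply splice_out; lra. }
  destruct (Rlt_dec t b).
  { apply right_cont_local with (fun _ => v); [apply right_cont_const|].
    exists (b - t); split; [lra|]. intros; apply splice_in; lra. }
  apply right_cont_local with f; auto. exists 1; split; [lra|].
  intros; apply splice_out; lra.
Qed.

Lemma is_RInt_splice (f : R -> R) a b v T : 0 <= a <= b -> b <= T -> ex_RInt f 0 T ->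
  is_RInt (splice a b v f) 0 T (RInt f 0 T + ((b - a) * v - RInt f a b)).
Proof.
  intros Hab HbT Hf.
  assert (E0a : ex_RInt f 0 a) by (apply (ex_RInt_sub f 0 T); auto; lra).
  assert (Eab : ex_RInt f a b) by (apply (ex_RInt_sub f 0 T); auto; lra).
  assert (EbT : ex_RInt f b T) by (apply (ex_RInt_sub f 0 T); auto; lra).
  assert (E0b : ex_RInt f 0 b) by (apply (ex_RInt_sub f 0 T); auto; lra).
  assert (I0a : is_RInt (splice a b v f) 0 a (RInt f 0 a)).
  { apply is_RInt_ext with f; [|apply (RInt_correct f); auto].
    intros t Ht. rewrite Rmin_left, Rmax_right in Ht by lra. rewrite splice_out; auto; lra. }
  assert (Iab : is_RInt (splice a b v f) a b (scal (b - a) v)).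
  { apply is_RInt_ext with (fun _ => v); [|apply (@is_RInt_const R_NormedModule)].
    intros t Ht. rewrite Rmin_left, Rmax_right in Ht by lra. rewrite splice_in; auto; lra. }
  assert (IbT : is_RInt (splice a b v f) b T (RInt f b T)).
  { apply is_RInt_ext with f; [|apply (RInt_correct f); auto].
    intros t Ht. rewrite Rmin_left, Rmax_right in Ht by lra. rewrite splice_out; auto; lra. }
  pose proof (is_RInt_Chasles _ _ _ _ _ _ (is_RInt_Chasles _ _ _ _ _ _ I0a Iab) IbT) as I.
  rewrite <- (RInt_Chasles f 0 b T), <- (RInt_Chasles f 0 a b) by auto.
  replace (plus (plus (RInt f 0 a) (RInt f a b)) (RInt f b T) + ((b - a) * v - RInt f a b))
    with (plus (plus (RInt f 0 a) (scal (b - a) v)) (RInt f b T)); auto.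
  unfold plus, scal; simpl; unfold mult; simpl. ring.
Qed.

Definition splice2 (t1 t2 dl v : R) (f : R -> R) : R -> R :=
  splice t2 (t2 + dl) v (splice t1 (t1 + dl) v f).

Lemma splice2_dichotomy t1 t2 dl t :
  (forall v f, splice2 t1 t2 dl v f t = v) \/ (forall v f, splice2 t1 t2 dl v f t = f t).
Proof.
  unfold splice2, splice.
  destruct (Rle_dec t2 t), (Rlt_dec t (t2 + dl)), (Rle_dec t1 t), (Rlt_dec t (t1 + dl)); auto.
Qed.

Lemma splice2_comp (g : R -> R) t1 t2 dl v f t :
  g (splice2 t1 t2 dl v f t) = splice2 t1 t2 dl (g v) (fun u => g (f u)) t.
Proof. destruct (splice2_dichotomy t1 t2 dl t) as [E|E]; rewrite !E; auto. Qed.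

Lemma splice2_before t1 t2 dl v f t : t < t1 -> t < t2 -> splice2 t1 t2 dl v f t = f t.
Proof. intros. unfold splice2. rewrite !splice_out; auto; lra. Qed.

Lemma right_cont_splice2 t1 t2 dl v f t : right_cont_at f t -> right_cont_at (splice2 t1 t2 dl v f) t.
Proof. intros; apply right_cont_splice, right_cont_splice; auto. Qed.

Lemma RInt_splice2_gt (g : R -> R) t1 t2 T u :
  0 <= t1 -> t1 < t2 -> t2 < T -> ex_RInt g 0 T ->
  right_cont_at g t1 -> right_cont_at g t2 -> g t1 + g t2 < 2 * u ->
  exists d, 0 < d /\ forall dl, 0 < dl <= d ->
    ex_RInt (splice2 t1 t2 dl u g) 0 T /\ RInt g 0 T < RInt (splice2 t1 t2 dl u g) 0 T.
Proof.
  intros H1 H12 H2T Hg Hrc1 Hrc2 Hu.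
  set (m := 2 * u - g t1 - g t2).
  destruct (Hrc1 (m / 4) ltac:(unfold m; lra)) as [d1 [Hd1 Hnear1]].
  destruct (Hrc2 (m / 4) ltac:(unfold m; lra)) as [d2 [Hd2 Hnear2]].
  exists (Rmin (Rmin d1 d2) (Rmin (t2 - t1) (T - t2))).
  split; [repeat apply Rmin_pos; lra|]. intros dl [Hdl Hdld].
  pose proof (Rmin_l (Rmin d1 d2) (Rmin (t2 - t1) (T - t2))).
  pose proof (Rmin_r (Rmin d1 d2) (Rmin (t2 - t1) (T - t2))).
  pose proof (Rmin_l d1 d2); pose proof (Rmin_r d1 d2).
  pose proof (Rmin_l (t2 - t1) (T - t2)); pose proof (Rmin_r (t2 - t1) (T - t2)).
  set (h := splice t1 (t1 + dl) u g).
  assert (Ih : is_RInt h 0 T (RInt g 0 T + ((t1 + dl - t1) * u - RInt g t1 (t1 + dl))))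
    by (apply is_RInt_splice; auto; lra).
  assert (Eh : ex_RInt h 0 T) by (eexists; eauto).
  assert (I : is_RInt (splice2 t1 t2 dl u g) 0 T
                (RInt h 0 T + ((t2 + dl - t2) * u - RInt h t2 (t2 + dl))))
    by (apply is_RInt_splice; auto; lra).
  assert (Hh2 : RInt h t2 (t2 + dl) = RInt g t2 (t2 + dl)).
  { apply RInt_ext. intros t Ht. rewrite Rmin_left, Rmax_right in Ht by lra.
    apply splice_out; lra. }
  assert (B1 : RInt g t1 (t1 + dl) <= (t1 + dl - t1) * (g t1 + m / 4)).
  { apply RInt_le_const; [lra | apply (ex_RInt_sub g 0 T); auto; lra |].
    intros t Ht. specialize (Hnear1 t ltac:(lra)). apply Rabs_def2 in Hnear1. lra. }
  assert (B2 : RInt g t2 (t2 + dl) <= (t2 + dl - t2) * (g t2 + m / 4)).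
  { apply RInt_le_const; [lra | apply (ex_RInt_sub g 0 T); auto; lra |].
    intros t Ht. specialize (Hnear2 t ltac:(lra)). apply Rabs_def2 in Hnear2. lra. }
  split; [eexists; eauto|].
  rewrite (is_RInt_unique _ _ _ _ I), (is_RInt_unique _ _ _ _ Ih), Hh2.
  assert (0 < dl * m) by (apply Rmult_lt_0_compat; unfold m; lra).
  unfold m in *. nra.
Qed.

Lemma RInt_lipschitz (f : R -> R) T K : ex_RInt f 0 T -> (forall t, 0 < t < T -> 0 <= f t <= K) ->
  forall u v, 0 <= u <= T -> 0 <= v <= T -> Rabs (RInt f 0 v - RInt f 0 u) <= K * Rabs (v - u).
Proof.
  intros Hf Hb.
  assert (Hmono : forall u v, 0 <= u <= v -> v <= T ->
            0 <= RInt f 0 v - RInt f 0 u <= K * (v - u)).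
  { intros u v Huv HvT.
    rewrite <- (RInt_Chasles f 0 u v) by (apply (ex_RInt_sub f 0 T); auto; lra).
    unfold plus; simpl.
    assert (Euv : ex_RInt f u v) by (apply (ex_RInt_sub f 0 T); auto; lra).
    pose proof (RInt_ge_const f u v 0 ltac:(lra) Euv ltac:(intros; apply Hb; lra)).
    pose proof (RInt_le_const f u v K ltac:(lra) Euv ltac:(intros; apply Hb; lra)).
    lra. }
  intros u v Hu Hv. destruct (Rle_dec u v).
  - specialize (Hmono u v ltac:(lra) ltac:(lra)).
    rewrite !Rabs_pos_eq by lra. lra.
  - specialize (Hmono v u ltac:(lra) ltac:(lra)).
    rewrite Rabs_left1, Rabs_left by lra. lra.
Qed.

Definition clamp (T t : R) : R := Rmax 0 (Rmin t T).

Lemma clamp_in T t : 0 <= T -> 0 <= clamp T t <= T.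
Proof. intros. unfold clamp, Rmax, Rmin. destruct (Rle_dec t T), (Rle_dec 0 _); lra. Qed.

Lemma clamp_id T t : 0 <= t <= T -> clamp T t = t.
Proof. intros. unfold clamp, Rmax, Rmin. destruct (Rle_dec t T), (Rle_dec 0 _); lra. Qed.

Lemma clamp_lipschitz T t t' : 0 <= T -> Rabs (clamp T t - clamp T t') <= Rabs (t - t').
Proof.
  intros. unfold clamp, Rmax, Rmin. destruct (Rle_dec t T), (Rle_dec t' T);
  repeat match goal with |- context [Rle_dec ?a ?b] => destruct (Rle_dec a b) end;
  unfold Rabs; repeat match goal with |- context [Rcase_abs ?a] => destruct (Rcase_abs a) end; lra.
Qed.

(* The clamp extends [t |-> RInt f 0 t] from [0, T] to a continuous function on all of R,
   as the intermediate value theorem requires. *)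
Lemma RInt_reaches (f : R -> R) T K x : 0 < T -> ex_RInt f 0 T ->
  (forall t, 0 < t < T -> 0 <= f t <= K) -> 0 < x <= RInt f 0 T ->
  exists T', 0 < T' <= T /\ is_RInt f 0 T' x /\ (x < RInt f 0 T -> T' < T).
Proof.
  intros HT Hf Hb Hx.
  assert (Hint : forall T', 0 <= T' <= T -> is_RInt f 0 T' (RInt f 0 T')).
  { intros; apply (RInt_correct f), (ex_RInt_sub f 0 T); auto; lra. }
  destruct (Req_dec x (RInt f 0 T)) as [->|Hne].
  { exists T. split; [lra|]. split; [apply Hint; lra | intros; lra]. }
  assert (HK : 0 <= K) by (pose proof (Hb (T / 2) ltac:(lra)); lra).
  set (F := fun t => RInt f 0 (clamp T t) - x).
  assert (HF : forall a, continuity_pt F a).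
  { intros a e He. exists (e / (K + 1)). split; [apply Rdiv_lt_0_compat; lra|].
    intros y [_ Hy]. simpl in *. unfold R_dist, F in *.
    replace (RInt f 0 (clamp T y) - x - (RInt f 0 (clamp T a) - x))
      with (RInt f 0 (clamp T y) - RInt f 0 (clamp T a)) by ring.
    eapply Rle_lt_trans; [apply (RInt_lipschitz f T K); auto; apply clamp_in; lra|].
    eapply Rle_lt_trans; [apply Rmult_le_compat_l; auto; apply clamp_lipschitz; lra|].
    apply (Rmult_lt_compat_r (K + 1)) in Hy; [|lra].
    unfold Rdiv in Hy. rewrite Rmult_assoc, Rinv_l in Hy by lra.
    pose proof (Rabs_pos (y - a)). nra. }
  assert (F0 : F 0 < 0).
  { unfold F. rewrite clamp_id, RInt_point by lra. unfold zero; simpl. lra. }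
  assert (FT : 0 < F T) by (unfold F; rewrite clamp_id by lra; lra).
  destruct (IVT F 0 T HF HT F0 FT) as [z [Hz HFz]].
  unfold F in HFz. rewrite clamp_id in HFz by lra.
  assert (z <> 0) by (intros ->; rewrite RInt_point in HFz; unfold zero in HFz; simpl in HFz; lra).
  assert (z <> T) by (intros ->; apply Hne; lra).
  exists z. split; [lra|]. split; [|intros; lra].
  replace x with (RInt f 0 z) by lra. apply Hint; lra.
Qed.

Definition cut (c : R) (f : R -> R) (t : R) : R := if Rlt_dec t c then f t else 0.

Lemma right_cont_cut c f t : right_cont_at f t -> right_cont_at (cut c f) t.
Proof.
  intros Hf. unfold cut. destruct (Rlt_dec t c).
  - apply right_cont_local with f; auto. exists (c - t); split; [lra|].
    intros; destruct (Rlt_dec _ _); auto; lra.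
  - apply right_cont_local with (fun _ => 0); [apply right_cont_const|].
    exists 1; split; [lra|]. intros; destruct (Rlt_dec _ _); auto; lra.
Qed.

Lemma uniform_small_param (P : nat -> R -> Prop) n :
  (forall j, (j < n)%nat -> exists d, 0 < d /\ forall e, 0 < e <= d -> P j e) ->
  exists d, 0 < d /\ forall j, (j < n)%nat -> forall e, 0 < e <= d -> P j e.
Proof.
  induction n as [|n IH]; intros Hex.
  - exists 1; split; [lra | intros; lia].
  - destruct IH as [d1 [Hd1 H1]]; [intros; apply Hex; lia|].
    destruct (Hex n ltac:(lia)) as [d2 [Hd2 H2]].
    exists (Rmin d1 d2). split; [apply Rmin_pos; auto|].
    pose proof (Rmin_l d1 d2); pose proof (Rmin_r d1 d2).
    intros j Hj e He. destruct (Nat.eq_dec j n) as [->|Hjn].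
    + apply H2; lra.
    + apply H1; [lia | lra].
Qed.

Lemma zero_after_completion M x B s theta T : feasible M x B s theta T ->
  forall j, (j < M)%nat -> forall t, T j <= t -> theta j t = 0.
Proof.
  intros [_ [Hrc [_ [HT [_ Hz]]]]] j Hj t Ht.
  destruct (Rle_lt_or_eq_dec _ _ Ht) as [Hlt| <-]; [apply Hz; auto|].
  pose proof (HT j Hj).
  apply Rabs_eq_0, Rle_antisym; [apply Rnot_lt_le; intro Hpos | apply Rabs_pos].
  destruct (Hrc j Hj (T j) ltac:(lra) _ Hpos) as [d [Hd Hu]].
  specialize (Hu (T j + d / 2) ltac:(lra)). rewrite (Hz j Hj) in Hu by lra.
  rewrite Rminus_0_l, Rabs_Ropp in Hu. lra.
Qed.

Section Truncation.

Variables (M : nat) (x : nat -> R) (B : R) (s : R -> R) (theta : nat -> R -> R).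
Hypothesis hB : 0 <= B.
Hypothesis theta_range : forall j, (j < M)%nat -> forall t, 0 < t -> in_0B B (theta j t).
Hypothesis theta_right_cont : forall j, (j < M)%nat -> forall t, 0 < t -> right_cont_at (theta j) t.
Hypothesis theta_budget : forall t, 0 < t -> rsum (fun j => theta j t) M <= B.

Lemma feasible_cut T' : (forall j, (j < M)%nat -> 0 < T' j) ->
  (forall j, (j < M)%nat -> is_RInt (fun t => s (theta j t)) 0 (T' j) (x j)) ->
  feasible M x B s (fun j => cut (T' j) (theta j)) T'.
Proof.
  intros HT' Hx. unfold cut.
  split; [|split; [|split; [|split; [|split]]]]; auto.
  - intros j Hj t Ht. destruct (Rlt_dec _ _); [apply theta_range; auto | lra].
  - intros j Hj t Ht. apply right_cont_cut, theta_right_cont; auto.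
  - intros t Ht. apply Rle_trans with (2 := theta_budget t Ht). apply rsum_le.
    intros j Hj. destruct (Rlt_dec _ _); [lra | apply theta_range; auto].
  - intros j Hj. apply is_RInt_ext with (fun t => s (theta j t)); auto.
    intros t Ht. rewrite Rmin_left, Rmax_right in Ht by (specialize (HT' j Hj); lra).
    destruct (Rlt_dec _ _); auto; lra.
  - intros j Hj t Ht. destruct (Rlt_dec _ _); auto; lra.
Qed.

Lemma cut_decreases_cost w T i :
  speedup_ok B s -> (forall j, (j < M)%nat -> 0 < x j) -> (forall j, (j < M)%nat -> 0 < w j) ->
  (forall j, (j < M)%nat -> 0 < T j) ->
  (forall j, (j < M)%nat ->
     ex_RInt (fun t => s (theta j t)) 0 (T j) /\ x j <= RInt (fun t => s (theta j t)) 0 (T j)) ->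
  (i < M)%nat -> x i < RInt (fun t => s (theta i t)) 0 (T i) ->
  exists theta' T', feasible M x B s theta' T' /\ cost M w T' < cost M w T.
Proof.
  intros hs hx hw HT Hserv Hi Hmore.
  assert (HT' : forall j, exists Tj, (j < M)%nat -> 0 < Tj <= T j /\
            is_RInt (fun t => s (theta j t)) 0 Tj (x j) /\
            (x j < RInt (fun t => s (theta j t)) 0 (T j) -> Tj < T j)).
  { intros j. destruct (Compare_dec.lt_dec j M) as [Hj|Hj]; [|exists 0; intros; lia].
    destruct (Hserv j Hj) as [Ej Lj].
    destruct (RInt_reaches (fun t => s (theta j t)) (T j) (s B) (x j)) as [Tj HTj]; auto.
    - intros t Ht. apply (speedup_bounds B s hs); auto. apply theta_range; auto; lra.
    - exists Tj; auto. }
  destruct (functional_choice _ HT') as [T' HT'f].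
  exists (fun j => cut (T' j) (theta j)), T'. split.
  - apply feasible_cut; intros j Hj; apply (HT'f j Hj).
  - apply rsum_lt with i; auto.
    + intros j Hj. destruct (HT'f j Hj) as [[A0 A1] _]. pose proof (hw j Hj). nra.
    + destruct (HT'f i Hi) as [_ [_ A3]]. specialize (A3 Hmore). pose proof (hw i Hi). nra.
Qed.

End Truncation.

Lemma averaged_allocation B s M (a b : nat -> R) i : speedup_ok B s ->
  (forall j, (j < M)%nat -> in_0B B (a j) /\ in_0B B (b j)) ->
  rsum a M <= B -> rsum b M <= B -> (i < M)%nat -> a i <> b i ->
  exists d : nat -> R, (forall j, (j < M)%nat -> in_0B B (d j)) /\ rsum d M <= B /\
    (forall j, (j < M)%nat -> s (a j) + s (b j) < 2 * s (d j)).
Proof.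
  intros hs Hab HsA HsB Hi Hne.
  set (c := fun j => (a j + b j) / 2).
  destruct (Hab i Hi) as [Hai Hbi].
  assert (Hci : 0 < c i /\ in_0B B (c i)).
  { unfold in_0B, c in *. destruct (Req_dec (a i) 0); [|lra].
    assert (b i <> 0) by congruence. lra. }
  pose proof (speedup_midpoint_lt B s hs _ _ Hai Hbi Hne) as Hgap. fold (c i) in Hgap.
  set (g := 2 * s (c i) - s (a i) - s (b i)).
  destruct (speedup_continuous B s hs (c i) (proj2 Hci) (g / 2) ltac:(unfold g; lra))
    as [r [Hr Hsr]].
  set (rho := Rmin (r / 2) (c i)).
  assert (Hrho : 0 < rho <= c i /\ rho < r).
  { pose proof (Rmin_l (r / 2) (c i)); pose proof (Rmin_r (r / 2) (c i)).
    pose proof (Rmin_pos (r / 2) (c i) ltac:(lra) (proj1 Hci)). unfold rho; lra. }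
  assert (Hshare : 0 < rho / INR M <= rho).
  { assert (HM : 1 <= INR M) by (replace 1 with (INR 1) by reflexivity; apply le_INR; lia).
    split; [apply Rdiv_lt_0_compat; lra|].
    apply Rmult_le_reg_r with (INR M); [lra|]. unfold Rdiv. rewrite Rmult_assoc, Rinv_l; nra. }
  exists (fun j => if Nat.eq_dec j i then c j - rho else c j + rho / INR M).
  assert (Hcj : forall j, (j < M)%nat -> j <> i -> 0 <= c j /\ c j + c i <= B).
  { intros j Hj Hji. destruct (Hab j Hj).
    pose proof (rsum_two a M j i (fun k Hk => proj1 (proj1 (Hab k Hk))) Hj Hi Hji).
    pose proof (rsum_two b M j i (fun k Hk => proj1 (proj2 (Hab k Hk))) Hj Hi Hji).
    unfold in_0B, c in *. lra. }
  split; [|split].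
  - intros j Hj. destruct (Nat.eq_dec j i) as [->|Hji]; unfold in_0B in *.
    + lra.
    + destruct (Hcj j Hj Hji). lra.
  - eapply Rle_trans; [apply rsum_redistribute; auto; lra|].
    assert (rsum c M = (rsum a M + rsum b M) / 2).
    { unfold c, Rdiv. rewrite <- rsum_plus, Rmult_comm, <- rsum_scal.
      apply rsum_ext; intros; lra. }
    lra.
  - intros j Hj. destruct (Nat.eq_dec j i) as [->|Hji].
    + assert (Hnear : Rabs (s (c i - rho) - s (c i)) < g / 2).
      { apply Hsr; [unfold in_0B in *; lra|].
        replace (c i - rho - c i) with (- rho) by ring.
        rewrite Rabs_Ropp, Rabs_pos_eq; lra. }
      apply Rabs_def2 in Hnear. unfold g in *. lra.
    + destruct (Hab j Hj) as [Haj Hbj]. destruct (Hcj j Hj Hji).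
      pose proof (speedup_midpoint_le B s hs _ _ Haj Hbj) as Hmid. fold (c j) in Hmid.
      destruct hs as [_ [Hmono _]].
      assert (s (c j) < s (c j + rho / INR M)) by (apply Hmono; unfold in_0B, c in *; lra).
      lra.
Qed.

Section Patching.

Variables (M : nat) (x : nat -> R) (B : R) (s : R -> R).
Variables (theta : nat -> R -> R) (T : nat -> R) (t1 t2 : R) (d : nat -> R).
Hypothesis hs : speedup_ok B s.
Hypothesis hfeas : feasible M x B s theta T.
Hypothesis ht1 : 0 < t1.
Hypothesis ht12 : t1 < t2.
Hypothesis active_stays : forall j, (j < M)%nat -> t1 < T j -> t2 < T j.
Hypothesis d_range : forall j, (j < M)%nat -> in_0B B (d j).
Hypothesis d_budget : rsum d M <= B.
Hypothesis d_gain : forall j, (j < M)%nat -> s (theta j t1) + s (theta j t2) < 2 * s (d j).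

Definition patched (dl : R) (j : nat) : R -> R := splice2 t1 t2 dl (d j) (theta j).

Lemma patched_range dl j t : (j < M)%nat -> 0 < t -> in_0B B (patched dl j t).
Proof.
  intros Hj Ht. destruct hfeas as [Hrange _]. unfold patched.
  destruct (splice2_dichotomy t1 t2 dl t) as [E|E]; rewrite E; [apply d_range | apply Hrange]; auto.
Qed.

Lemma patched_right_cont dl j t : (j < M)%nat -> 0 < t -> right_cont_at (patched dl j) t.
Proof. destruct hfeas as [_ [Hrc _]]. intros; apply right_cont_splice2; auto. Qed.

Lemma patched_budget dl t : 0 < t -> rsum (fun j => patched dl j t) M <= B.
Proof.
  intros Ht. destruct hfeas as [_ [_ [Hbudget _]]]. unfold patched.
  destruct (splice2_dichotomy t1 t2 dl t) as [E|E];
    rewrite (rsum_ext _ _ M (fun j _ => E (d j) (theta j))); auto.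
Qed.

Lemma patched_service_active j : (j < M)%nat -> t1 < T j ->
  exists e, 0 < e /\ forall dl, 0 < dl <= e ->
    ex_RInt (fun t => s (patched dl j t)) 0 (T j) /\
    x j < RInt (fun t => s (patched dl j t)) 0 (T j).
Proof.
  intros Hj Hj1. destruct hfeas as [Hrange [Hrc [_ [_ [Hx _]]]]].
  assert (Hrcs : forall t, 0 < t -> right_cont_at (fun u => s (theta j u)) t).
  { intros t Ht. apply (right_cont_speedup B s hs); auto.
    intros u Hu; apply Hrange; auto; lra. }
  destruct (RInt_splice2_gt (fun t => s (theta j t)) t1 t2 (T j) (s (d j))
              ltac:(lra) ht12 (active_stays j Hj Hj1) (ex_intro _ (x j) (Hx j Hj))
              (Hrcs t1 ht1) (Hrcs t2 ltac:(lra)) (d_gain j Hj)) as [e [He Hsp]].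
  exists e; split; auto. intros dl Hdl. destruct (Hsp dl Hdl) as [Ex Lt].
  assert (Hext : forall t, s (patched dl j t) =
                           splice2 t1 t2 dl (s (d j)) (fun u => s (theta j u)) t)
    by (intros; apply splice2_comp).
  rewrite (is_RInt_unique _ _ _ _ (Hx j Hj)) in Lt. split.
  - apply ex_RInt_ext with (2 := Ex). intros; auto.
  - rewrite (RInt_ext _ _ _ _ (fun t _ => Hext t)). auto.
Qed.

Lemma patched_service_done dl j : (j < M)%nat -> ~ t1 < T j ->
  is_RInt (fun t => s (patched dl j t)) 0 (T j) (x j).
Proof.
  intros Hj Hj1. destruct hfeas as [_ [_ [_ [HT [Hx _]]]]].
  apply is_RInt_ext with (fun t => s (theta j t)); auto.
  intros t Ht. rewrite Rmin_left, Rmax_right in Ht by (pose proof (HT j Hj); lra).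
  unfold patched. rewrite splice2_before; auto; lra.
Qed.

Lemma patched_more_service : exists dl, 0 < dl /\ forall j, (j < M)%nat ->
  ex_RInt (fun t => s (patched dl j t)) 0 (T j) /\
  x j <= RInt (fun t => s (patched dl j t)) 0 (T j) /\
  (t1 < T j -> x j < RInt (fun t => s (patched dl j t)) 0 (T j)).
Proof.
  destruct (uniform_small_param (fun j dl => t1 < T j ->
              ex_RInt (fun t => s (patched dl j t)) 0 (T j) /\
              x j < RInt (fun t => s (patched dl j t)) 0 (T j)) M) as [dl [Hdl Hsmall]].
  { intros j Hj. destruct (Rlt_dec t1 (T j)) as [Hj1|Hj1].
    - destruct (patched_service_active j Hj Hj1) as [e [He Hsp]]. exists e; auto.
    - exists 1; split; [lra | intros; contradiction]. }
  exists dl; split; auto. intros j Hj. destruct (Rlt_dec t1 (T j)) as [Hj1|Hj1].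
  - destruct (Hsmall j Hj dl ltac:(lra) Hj1). repeat split; auto; lra.
  - pose proof (patched_service_done dl j Hj Hj1) as I.
    rewrite (is_RInt_unique _ _ _ _ I). repeat split; [exists (x j); auto | lra | tauto].
Qed.

End Patching.

Lemma optimal_allocation_repeats M x w B s theta T (hB : 0 < B)
  (hx_pos : forall i, (i < M)%nat -> 0 < x i) (hw_pos : forall i, (i < M)%nat -> 0 < w i)
  (hs : speedup_ok B s) (hopt : optimal M x w B s theta T) t1 t2 :
  0 < t1 -> t1 < t2 -> remaining M T t1 = remaining M T t2 ->
  forall i, (i < M)%nat -> theta i t1 = theta i t2.
Proof.
  intros H1 H12 Hrem i Hi.
  destruct hopt as [Hf Hopt]. pose proof Hf as [Hrange [_ [Hbudget [HT _]]]].
  destruct (Req_dec (theta i t1) (theta i t2)) as [|Hne]; auto. exfalso.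
  pose proof (remaining_eq_active M T t1 t2 ltac:(lra) Hrem) as Hact.
  assert (Hia : t1 < T i).
  { destruct (Rlt_dec t1 (T i)) as [|Hn]; auto. exfalso; apply Hne.
    rewrite !(zero_after_completion M x B s theta T Hf); auto; lra. }
  assert (Hab : forall j, (j < M)%nat -> in_0B B (theta j t1) /\ in_0B B (theta j t2))
    by (intros j Hj; split; apply Hrange; auto; lra).
  destruct (averaged_allocation B s M (fun j => theta j t1) (fun j => theta j t2) i hs Hab
              (Hbudget t1 H1) (Hbudget t2 ltac:(lra)) Hi Hne) as [d [Hd [Hdsum Hdgain]]].
  destruct (patched_more_service M x B s theta T t1 t2 d hs Hf H1 H12 Hact Hdgain)
    as [dl [Hdl Hserv]].
  assert (Hbetter : exists theta' T', feasible M x B s theta' T' /\ cost M w T' < cost M w T).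
  { apply (cut_decreases_cost M x B s (patched theta t1 t2 d dl)) with (i := i); auto; try lra.
    - intros j Hj t Ht; apply (patched_range M x B s theta T); auto.
    - intros j Hj t Ht; apply (patched_right_cont M x B s theta T); auto.
    - intros t Ht; apply (patched_budget M x B s theta T); auto.
    - intros j Hj. destruct (Hserv j Hj) as [Ex [Le _]]. auto.
    - apply (Hserv i Hi); auto. }
  destruct Hbetter as [theta' [T' [Hf' Hcost]]].
  specialize (Hopt _ _ Hf'). lra.
Qed.

Theorem proposition7 (M : nat) (x w : nat -> R) (B : R) (s : R -> R)
  (hB : 0 < B)
  (hx_pos : forall i, (i < M)%nat -> 0 < x i)
  (hx_dec : forall i j, (i <= j < M)%nat -> x j <= x i)
  (hw_pos : forall i, (i < M)%nat -> 0 < w i)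
  (hw_inc : forall i j, (i <= j < M)%nat -> w i <= w j)
  (hs : speedup_ok B s)
  (theta : nat -> R -> R) (T : nat -> R)
  (hopt : optimal M x w B s theta T) :
  forall t1 t2, 0 < t1 -> 0 < t2 ->
    remaining M T t1 = remaining M T t2 ->
    forall i, (i < M)%nat -> theta i t1 = theta i t2.
Proof.
  intros t1 t2 H1 H2 Hrem i Hi.
  destruct (Rtotal_order t1 t2) as [Hlt|[<-|Hgt]]; auto.
  - exact (optimal_allocation_repeats M x w B s theta T hB hx_pos hw_pos hs hopt
             t1 t2 H1 Hlt Hrem i Hi).
  - symmetry. exact (optimal_allocation_repeats M x w B s theta T hB hx_pos hw_pos hs hopt
                       t2 t1 H2 Hgt (eq_sym Hrem) i Hi).
Qed.
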